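(* For every $n\ge 1$ and every Dyck path $D\in\mathcal{D}_n$, $\varphi(\psi(D))=\zeta(D)$, where $\zeta$ is the zeta map. In other words $\varphi\circ\psi=\zeta$.
   Context: A Dyck path of size $n$ is a lattice path from $(0,0)$ to $(n,n)$ with steps $\uparrow=(0,1)$ and $\rightarrow=(1,0)$ staying weakly above $y=x$; $\mathcal{D}_n$ is their set. Its area vector $(a_1,\dots,a_n)$ has $a_i$ equal to the number of full unit squares lying between the path and the diagonal $y=x$ in the row $i-1\le y\le i$ (area vectors are exactly the integer sequences with $a_1=0$, $0\le a_i\le a_{i-1}+1$, and determine the path). For a finite $S=\{x_1<\dots<x_n\}\subset\mathbb{R}$, $\preceq_S$ is the partial order on $[n]$ with $i\prec_S j$ iff $x_i+1<x_j$; a unit interval poset is a poset isomorphic to some $([n],\preceq_S)$ ($S$ is a starting set). $\psi$: for $D\in\mathcal{D}_n$ with area vector $(a_1,\dots,a_n)$, $\psi(D)$ is the poset on $[n]$ with $i\prec j$ iff either $a_i+2\le a_j$, or ($a_i+1=a_j$ and $i<j$); it is a unit interval poset. $\varphi$: for a unit interval poset $P$, choose a starting set $S$ of $P$ with $S\cap S^+=\varnothing$ where $S^+=\{x+1:x\in S\}$; write $S\cup S^+=\{y_1<\dots<y_{2n}\}$; $\varphi(P)$ is the Dyck path whose $i$-th step is $\uparrow$ if $y_i\in S$ and $\rightarrow$ otherwise (this is independent of the choice of $S$). Zeta map $\zeta:\mathcal{D}_n\to\mathcal{D}_n$ (Haglund's zeta map): for $D$ with area vector $(a_1,\dots,a_n)$,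 $\zeta(D)$ is the concatenation, for $\ell=0,1,2,\dots,\max_i a_i+1$ in this order, of the words obtained by scanning $j=1,2,\dots,n$ from left to right and writing $\uparrow$ whenever $a_j=\ell$ and $\rightarrow$ whenever $a_j=\ell-1$ (and nothing otherwise). *)

From HB Require Import structures.
From mathcomp Require Import all_boot all_order all_algebra.
From mathcomp Require Import reals.
Set Implicit Arguments. Unset Strict Implicit. Unset Printing Implicit Defensive.
Import Order.TTheory GRing.Theory Num.Theory.

(* A lattice path is a word over {up, right}: true = up (0,1), false = right (1,0). *)

Definition is_dyck (n : nat) (D : seq bool) : Prop :=
  [/\ size D = (2 * n)%N, count id D = n &
      forall k, (count (negb) (take k D) <= count id (take k D))%N].

(* Area vector: the i-th up step (row i-1 <= y <= i, 1-indexed) starts at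
   x-coordinate r = #rights before it; the full unit squares of that row lying
   between the path and the diagonal are [x,x+1]x[i-1,i] for r <= x <= i-2,
   so a_i = (i-1) - r.  [u] = #ups so far, [r] = #rights so far. *)
Fixpoint area_aux (u r : nat) (D : seq bool) : seq nat :=
  match D with
  | [::] => [::]
  | true :: D' => (u - r)%N :: area_aux u.+1 r D'
  | false :: D' => area_aux u r.+1 D'
  end.
Definition area (D : seq bool) : seq nat := area_aux 0 0 D.

(* psi: the poset on [n] (encoded 0-indexed as 'I_n) given by the strict
   order i < j iff a_i + 2 <= a_j, or (a_i + 1 = a_j and i < j). *)
Definition psi (n : nat) (a : seq nat) : rel 'I_n :=
  fun i j => ((nth 0 a i).+2 <= nth 0 a j)%N
             || (((nth 0 a i).+1 == nth 0 a j) && (i < j)%N).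

(* S = {x_1 < ... < x_n} (given as a strictly increasing list) is a starting
   set of the (strict) poset P on [n]: P is isomorphic to ([n], <_S) where
   i <_S j iff x_i + 1 < x_j. *)
Definition starting_set (R : realType) (n : nat) (P : rel 'I_n) (S : seq R) : Prop :=
  [/\ size S = n, sorted <%R S &
      exists sigma : 'I_n -> 'I_n, bijective sigma /\
        forall i j : 'I_n, P i j = (nth 0 S (sigma i) + 1 < nth 0 S (sigma j))%R].

Definition disjoint_shift (R : realType) (S : seq R) : Prop :=
  forall x, x \in S -> (x + 1)%R \notin S.

Definition phi_word (R : realType) (S : seq R) : seq bool :=
  [seq (y \in S) | y <- sort <=%R (S ++ [seq (x + 1)%R | x <- S])].

(* Haglund's zeta map, on the area vector a. For l = 0, ..., max a + 1,
   scan a left to right writing up when a_j = l and right when a_j = l - 1. *)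
Definition zeta_word (a : seq nat) : seq bool :=
  flatten [seq [seq (aj == l) | aj <- a & (aj == l) || (aj.+1 == l)]
          | l <- iota 0 (foldr maxn 0 a).+2].

Arguments psi n a : clear implicits.
Arguments starting_set R n P S : clear implicits.
Arguments disjoint_shift R S : clear implicits.
Arguments phi_word R S : clear implicits.

(* 1. phi(S) is an invariant of the poset.  A word over {up, right} is
      determined by its number of up steps and by its nondecreasing list of
      right heights (for each right step, the number of up steps before it).
      In phi(S) the right steps are the points y + 1 (y in S) and the height of
      y + 1 is #{x in S | x < y + 1}; since S and S^+ are disjoint this is
      #{x in S | ~ (y + 1 < x)}, the number of elements of the poset that are
      not above the element y.  Hence the multiset of heights, and therefore
      phi(S), only depends on the poset (phi_word_invariant).

   2. An explicit starting set.  For an area vector a of length n, put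
      N = n + 1 and S0 = {(a_i N + i) / N}.  Then S0 is a starting set of
      psi(a) whose translate S0^+ is disjoint from it, and after scaling by N
      the points of S0 and S0^+ are the distinct integer keys a_i N + i and
      (a_i + 1) N + i.  Sorting these keys reads the levels l = 0, 1, ... in
      turn and, inside level l, scans i from left to right, producing up when
      a_i = l and right when a_i + 1 = l: this is zeta(a) (phi_S0).

   The theorem follows: S0 witnesses existence, and any admissible S gives
   phi(S) = phi(S0) = zeta(a). *)
From HB Require Import structures.
From mathcomp Require Import all_boot all_order all_algebra.
From mathcomp Require Import reals zify.
Import Order.TTheory GRing.Theory Num.Theory.

Set Implicit Arguments.
Unset Strict Implicit.
Unset Printing Implicit Defensive.

Fixpoint right_heights (w : seq bool) : seq nat :=
  match w with
  | [::] => [::]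
  | true :: w' => map succn (right_heights w')
  | false :: w' => 0%N :: right_heights w'
  end.

Lemma right_heights_inj w1 w2 :
  count id w1 = count id w2 -> right_heights w1 = right_heights w2 -> w1 = w2.
Proof.
elim: w1 w2 => [|b1 w1 IH] [|b2 w2] //=.
- by case: b2 => //= _; case: (right_heights w2).
- by case: b1 => //= _; case: (right_heights w1).
case: b1; case: b2 => /=.
- by move=> [Hc] /(inj_map succn_inj) Ht; rewrite (IH _ Hc Ht).
- by case: (right_heights w1).
- by case: (right_heights w2).
- by move=> Hc [Ht]; rewrite (IH _ Hc Ht).
Qed.

Lemma right_heights_sorted w : sorted leq (right_heights w).
Proof.
elim: w => [|[] w IH] //=; first by rewrite sorted_map.
by case: (right_heights w) IH.
Qed.

Lemma perm_enum_bij n (sigma : 'I_n -> 'I_n) :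
  bijective sigma -> perm_eq (map sigma (enum 'I_n)) (enum 'I_n).
Proof.
move=> bij_sigma; apply: uniq_perm; last 1 first.
- move=> x; rewrite mem_enum; apply/mapP; case: bij_sigma => tau _ tauK.
  by exists (tau x); rewrite ?mem_enum ?tauK.
- by rewrite (map_inj_uniq (bij_inj bij_sigma)) enum_uniq.
- exact: enum_uniq.
Qed.

Definition not_above_counts n (P : rel 'I_n) : seq nat :=
  [seq count (fun j => ~~ P i j) (enum 'I_n) | i <- enum 'I_n].

Section PhiInvariance.
Variable R : realType.
Local Open Scope ring_scope.

Lemma right_heights_sorted_word (L : seq R) (T : pred R) : sorted <%R L ->
  right_heights (map T L) = [seq count T [seq x <- L | x < y] | y <- L & ~~ T y].
Proof.
elim: L => [|x L IH] //= sorted_xL.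
have lt_x : all (fun y => x < y) L := order_path_min lt_trans sorted_xL.
have count_x y : y \in L -> count T [seq z <- x :: L | z < y] =
                            addn (T x) (count T [seq z <- L | z < y]).
  by move=> yL; rewrite /= (allP lt_x y yL).
rewrite IH ?(path_sorted sorted_xL) //; case Tx: (T x) => /=.
  rewrite -map_comp; apply/eq_in_map => y.
  by rewrite mem_filter => /andP[_ /count_x ->]; rewrite Tx.
have -> : [seq z <- L | z < x] = [::].
  rewrite -(filter_pred0 L); apply: eq_in_filter => z /(allP lt_x) /= x_lt_z.
  by rewrite ltNge ltW.
rewrite ltxx; congr (_ :: _); apply/eq_in_map => y.
by rewrite mem_filter => /andP[_ /count_x]; rewrite Tx.
Qed.

Section Shift.
Variable S : seq R.
Hypothesis S_sorted : sorted <%R S.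
Hypothesis S_disj : disjoint_shift R S.

Let Sp := [seq x + 1 | x <- S].

Lemma notin_shift y : y \in Sp -> (y \in S) = false.
Proof. by case/mapP => x xS ->; apply/negbTE/S_disj. Qed.

Let L := sort <=%R (S ++ Sp).

Lemma perm_merge : perm_eq L (S ++ Sp).
Proof. by rewrite perm_sort. Qed.

Lemma count_merge (T : pred R) :
  count T L = (count T S + count T Sp)%N.
Proof. by rewrite (permP perm_merge) count_cat. Qed.

Lemma phi_word_count : count id (phi_word R S) = size S.
Proof.
rewrite count_map count_merge (eq_in_count (a2 := predT)) ?count_predT.
  by rewrite (eq_in_count (a2 := pred0)) ?count_pred0 ?addn0 // => y /notin_shift.
by move=> x xS; rewrite /= xS.
Qed.

Lemma phi_word_heights :
  perm_eq (right_heights (phi_word R S)) [seq count (fun x => x < y + 1) S | y <- S].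
Proof.
have uniq_merge : uniq (S ++ Sp).
  rewrite cat_uniq (map_inj_uniq (@addIr _ 1)) lt_sorted_uniq // andbT /=.
  by apply/hasPn => y /notin_shift ->.
rewrite right_heights_sorted_word ?sort_lt_sorted //.
apply: perm_trans (perm_map _ (perm_filter _ perm_merge)) _.
rewrite filter_cat (eq_in_filter (a2 := pred0)) ?filter_pred0 /=; last first.
  by move=> x xS; rewrite /= xS.
rewrite (_ : [seq y <- Sp | y \notin S] = Sp); last first.
  by apply/all_filterP/allP => y /notin_shift ->.
rewrite -map_comp; apply/permP => p; congr count; apply: eq_map => y /=.
rewrite count_filter count_merge.
rewrite [X in (_ + X)%N](eq_in_count (a2 := pred0)) ?count_pred0 ?addn0.
  by apply: eq_in_count => x xS /=; rewrite xS.
by move=> z /notin_shift /= ->.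
Qed.

End Shift.

Lemma starting_set_heights n (P : rel 'I_n) (S : seq R) :
  starting_set R n P S -> disjoint_shift R S ->
  perm_eq [seq count (fun x => x < y + 1) S | y <- S] (not_above_counts P).
Proof.
case=> size_S _ [sigma [bij_sigma P_S]] S_disj.
pose s (k : 'I_n) := nth 0 S k.
have S_enum : S = [seq s k | k <- enum 'I_n].
  by rewrite /s -[in LHS](mkseq_nth 0 S) size_S /mkseq -val_enum_ord -map_comp.
have s_in k : s k \in S by rewrite mem_nth // size_S.
pose g k := count (fun j => ~~ (s k + 1 < s j)) (enum 'I_n).
have -> : [seq count (fun x => x < y + 1) S | y <- S] = map g (enum 'I_n).
  rewrite {2}S_enum -map_comp; apply: eq_map => k /=.
  rewrite {1}S_enum count_map /g; apply: eq_count => j /=.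
  have neq : (s k + 1 == s j) = false.
    by apply/negbTE/eqP => E; move: (S_disj _ (s_in k)); rewrite E s_in.
  by rewrite ltNge le_eqVlt neq.
have -> : not_above_counts P = map (g \o sigma) (enum 'I_n).
  apply: eq_map => i; rewrite /= /g -[RHS](permP (perm_enum_bij bij_sigma)) [RHS]count_map.
  by apply: eq_count => j /=; rewrite P_S.
by rewrite map_comp perm_sym; apply/perm_map/perm_enum_bij.
Qed.

Lemma phi_word_invariant n (P : rel 'I_n) S1 S2 :
  starting_set R n P S1 -> disjoint_shift R S1 ->
  starting_set R n P S2 -> disjoint_shift R S2 -> phi_word R S1 = phi_word R S2.
Proof.
move=> st1 disj1 st2 disj2.
have [size1 sorted1 _] := st1; have [size2 sorted2 _] := st2.
apply: right_heights_inj; first by rewrite !phi_word_count // size1 size2.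
apply: (sorted_eq leq_trans anti_leq); rewrite ?right_heights_sorted //.
apply: perm_trans (phi_word_heights sorted1 disj1) _.
apply: perm_trans (starting_set_heights st1 disj1) _; rewrite perm_sym.
exact: perm_trans (phi_word_heights sorted2 disj2) (starting_set_heights st2 disj2).
Qed.

End PhiInvariance.

Lemma radix_inj N x y i j :
  (i < N)%N -> (j < N)%N -> (x * N + i = y * N + j)%N -> x = y /\ i = j.
Proof.
move=> iN jN E.
have eij : i = j by have := congr1 (modn^~ N) E; rewrite /= !modnMDl !modn_small.
by subst j; split=> //; apply/eqP; rewrite -(eqn_pmul2r (leq_ltn_trans (leq0n i) iN)); lia.
Qed.

(* Comparing a key of level x + 1 with a key of level y: this is exactly the
   order relation of psi on levels x, y and positions i, j. *)
Lemma radix_lt N x y i j : (i < N)%N -> (j < N)%N ->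
  (x.+1 * N + i < y * N + j)%N = (x.+2 <= y)%N || ((x.+1 == y) && (i < j)%N).
Proof.
move=> iN jN; case: (ltngtP x.+1 y) => [lt_xy|lt_yx|<-] /=.
- by apply/idP; nia.
- by apply/negbTE; rewrite -leqNgt; nia.
- by rewrite ltn_add2l.
Qed.

Definition radix_keys N n (f : nat -> nat) : seq nat :=
  [seq f i * N + i | i <- iota 0 n].

Lemma mem_radix_keys N n f l j : (n < N)%N -> (j < N)%N ->
  (l * N + j \in radix_keys N n f) = (j < n)%N && (f j == l).
Proof.
move=> nN jN; apply/mapP/andP => [[i]|[jn /eqP <-]]; last first.
  by exists j; rewrite // mem_iota.
rewrite mem_iota add0n => /andP[_ iN] E.
by have [<- <-] := radix_inj (ltn_trans iN nN) jN (esym E).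
Qed.

Lemma uniq_radix_keys N n f : (n <= N)%N -> uniq (radix_keys N n f).
Proof.
move=> nN; rewrite map_inj_in_uniq ?iota_uniq // => i j.
rewrite !mem_iota !add0n => /andP[_ iN] /andP[_ jN] E.
by have [] := radix_inj (leq_trans iN nN) (leq_trans jN nN) E.
Qed.

Lemma radix_bound N M x i : (i < N)%N -> (x < M)%N -> (x * N + i < M * N)%N.
Proof. by move=> iN xM; nia. Qed.

Lemma iota_blocks N m M :
  iota (m * N) (M * N) = flatten [seq iota (l * N) N | l <- iota m M].
Proof.
elim: M m => [|M IH] m //=.
by rewrite mulSn iotaD -IH mulSn addnC.
Qed.

Lemma sort_uniq_iota (K : seq nat) B : uniq K -> all (fun k => k < B)%N K ->
  sort leq K = [seq k <- iota 0 B | k \in K].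
Proof.
move=> uniq_K lt_K; apply: (irr_sorted_eq ltn_trans ltnn).
- by rewrite ltn_sorted_uniq_leq sort_uniq uniq_K (sort_sorted leq_total).
- by apply: sorted_filter; [exact: ltn_trans | exact: iota_ltn_sorted].
move=> k; rewrite mem_sort mem_filter mem_iota add0n /=.
by case kK: (k \in K) => //=; rewrite (allP lt_K k kK).
Qed.

Lemma nth_le_max (a : seq nat) i : (nth 0 a i <= foldr maxn 0 a)%N.
Proof.
elim: a i => [|x a IH] [|i] //=; first by rewrite leq_maxl.
exact: leq_trans (IH i) (leq_maxr _ _).
Qed.

Section Construction.
Variables (R : realType) (n : nat) (a : seq nat).
Local Open Scope ring_scope.

Let N := n.+1.

Definition up_keys : seq nat := radix_keys N n (nth 0%N a).
Definition right_keys : seq nat := radix_keys N n (fun i => (nth 0%N a i).+1).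

Lemma right_keysE : right_keys = [seq (k + N)%N | k <- up_keys].
Proof. by rewrite -map_comp; apply: eq_map => i /=; rewrite addnAC -mulSnr. Qed.

(* No up key is a right key, since a_i = a_j + 1 forces i <> j. *)
Lemma up_notin_right k : k \in up_keys -> (k \in right_keys) = false.
Proof.
case/mapP => i; rewrite mem_iota add0n => /andP[_ iN] ->.
apply/negbTE/mapP => -[j]; rewrite mem_iota add0n => /andP[_ jN] E.
have [level_eq ij] := radix_inj (ltn_trans iN (ltnSn n)) (ltn_trans jN (ltnSn n)) E.
by move: level_eq; rewrite ij => /n_Sn.
Qed.

(* Rescaling the keys into R by 1 / N: an order embedding turning the
   translation by N into the translation by 1. *)
Definition scale (k : nat) : R := k%:R / N%:R.

Lemma scale_lt x y : (scale x < scale y) = (x < y)%N.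
Proof. by rewrite /scale ltr_pM2r ?invr_gt0 ?ltr0n // ltr_nat. Qed.

Lemma scale_le x y : (scale x <= scale y) = (x <= y)%N.
Proof. by rewrite /scale ler_pM2r ?invr_gt0 ?ltr0n // ler_nat. Qed.

Lemma scale_inj : injective scale.
Proof. by move=> x y E; apply/eqP; rewrite eqn_leq -!scale_le E !lexx. Qed.

Lemma scale_shift x : scale x + 1 = scale (x + N).
Proof. by rewrite /scale natrD mulrDl divff // pnatr_eq0. Qed.

Definition S0 : seq R := map scale (sort leq up_keys).

Lemma size_sorted_keys : size (sort leq up_keys) = n.
Proof. by rewrite size_sort size_map size_iota. Qed.

Lemma S0_sorted : sorted <%R S0.
Proof.
rewrite sorted_map (eq_sorted (e' := ltn)) => [|x y]; last by rewrite /= scale_lt.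
by rewrite ltn_sorted_uniq_leq sort_uniq uniq_radix_keys // (sort_sorted leq_total).
Qed.

(* S0^+ is the rescaled set of right keys, hence disjoint from S0. *)
Lemma S0_disjoint_shift : disjoint_shift R S0.
Proof.
move=> x /mapP[k]; rewrite mem_sort => k_up ->; rewrite scale_shift.
apply/mapP => -[k']; rewrite mem_sort => k'_up /scale_inj k'E.
by move: (up_notin_right k'_up); rewrite right_keysE -k'E (map_f (fun k => k + N)%N k_up).
Qed.

Lemma key_in_sorted (i : 'I_n) : (nth 0 a i * N + i)%N \in sort leq up_keys.
Proof. by rewrite mem_sort; apply: map_f; rewrite mem_iota /=. Qed.

(* Element i of psi(a) corresponds to the rank of its key among all keys. *)
Lemma S0_starting_set : starting_set R n (psi n a) S0.
Proof.
have rank_lt (i : 'I_n) : (index (nth 0 a i * N + i) (sort leq up_keys) < n)%N.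
  by rewrite -[X in (_ < X)%N]size_sorted_keys index_mem key_in_sorted.
pose sigma (i : 'I_n) : 'I_n := Ordinal (rank_lt i).
have S0_sigma i : nth 0 S0 (sigma i) = scale (nth 0 a i * N + i).
  by rewrite /S0 (nth_map 0%N) ?size_sorted_keys // nth_index ?key_in_sorted.
split; [by rewrite size_map size_sorted_keys | exact: S0_sorted | exists sigma].
split=> [|i j]; last first.
  rewrite !S0_sigma scale_shift scale_lt addnAC -mulSnr.
  by rewrite radix_lt //; exact: ltnW (ltn_ord _).
apply: inj_card_bij => // i j /(congr1 val) /= /(congr1 (nth 0%N (sort leq up_keys))).
rewrite !nth_index ?key_in_sorted // => E; apply: val_inj.
by have [] := @radix_inj N _ _ i j (ltnW (ltn_ord i)) (ltnW (ltn_ord j)) E.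
Qed.

Lemma phi_S0_keys :
  phi_word R S0 = [seq k \in up_keys | k <- sort leq (up_keys ++ right_keys)].
Proof.
have merge_scale : S0 ++ [seq x + 1 | x <- S0] =
                   map scale (sort leq up_keys ++ [seq (k + N)%N | k <- sort leq up_keys]).
  by rewrite map_cat /S0 -!map_comp; congr (_ ++ _); apply: eq_map => k /=; rewrite scale_shift.
rewrite /phi_word merge_scale -(map_sort scale_le) -map_comp.
have -> : sort leq (sort leq up_keys ++ [seq (k + N)%N | k <- sort leq up_keys]) =
          sort leq (up_keys ++ right_keys).
  apply/(perm_sortP leq_total leq_trans anti_leq).
  by rewrite right_keysE; apply: perm_cat; [|apply: perm_map]; rewrite perm_sort.
by apply: eq_map => k /=; rewrite mem_map ?mem_sort //; exact: scale_inj.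
Qed.

(* All levels a_i and a_i + 1 are below M, so all keys lie below M N. *)
Let M := (foldr maxn 0 a).+2.

Lemma sorted_keys :
  sort leq (up_keys ++ right_keys) = [seq k <- iota 0 (M * N) | k \in up_keys ++ right_keys].
Proof.
apply: sort_uniq_iota.
  rewrite cat_uniq !uniq_radix_keys // andbT /=.
  by apply/hasPn => k /= k_right; apply/negP => /up_notin_right; rewrite k_right.
have level_lt i : ((nth 0 a i).+1 < M)%N by rewrite !ltnS nth_le_max.
apply/allP => k; rewrite mem_cat => /orP[] /mapP[i]; rewrite mem_iota add0n.
- by move=> /andP[_ iN] ->; exact: (@radix_bound N M _ i (ltnW iN) (ltnW (level_lt i))).
- by move=> /andP[_ iN] ->; exact: (@radix_bound N M _ i (ltnW iN) (level_lt i)).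
Qed.

Hypothesis size_a : size a = n.

Lemma level_keys l :
  [seq k \in up_keys | k <- [seq k <- iota (l * N)%N N | k \in up_keys ++ right_keys]] =
  [seq aj == l | aj <- a & (aj == l) || (aj.+1 == l)].
Proof.
have memE j : (j < N)%N -> ((l * N + j)%N \in up_keys) = (j < n)%N && (nth 0 a j == l).
  exact: mem_radix_keys.
have memE' j : (j < N)%N ->
    ((l * N + j)%N \in right_keys) = (j < n)%N && ((nth 0 a j).+1 == l).
  exact: mem_radix_keys.
rewrite -[(l * N)%N]addn0 iotaDl filter_map -map_comp.
have iotaN : iota 0 N = iota 0 n ++ [:: n] by rewrite /N -addn1 iotaD.
rewrite [in LHS]iotaN filter_cat map_cat /= mem_cat memE // memE' // ltnn /= cats0.
rewrite -[in RHS](mkseq_nth 0%N a) size_a /mkseq filter_map -map_comp.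
have lt_iota j : j \in iota 0 n -> (j < n)%N /\ (j < N)%N.
  by rewrite mem_iota add0n => jn; split=> //; apply: ltnW.
rewrite (@eq_in_filter _ _ (fun j => (nth 0 a j == l) || ((nth 0 a j).+1 == l))).
  apply/eq_in_map => j; rewrite mem_filter => /andP[_ /lt_iota[jn jN]].
  by rewrite /= memE // jn.
by move=> j /lt_iota[jn jN]; rewrite /= mem_cat memE // memE' // jn.
Qed.

Lemma phi_S0 : phi_word R S0 = zeta_word a.
Proof.
rewrite phi_S0_keys sorted_keys -[0%N](mul0n N) iota_blocks filter_flatten.
rewrite -map_comp map_flatten -map_comp; congr flatten.
by apply: eq_map => l; rewrite /= level_keys.
Qed.

End Construction.

Lemma size_area_aux u r D : size (area_aux u r D) = count id D.
Proof. by elim: D u r => [|[] D IH] u r //=; rewrite IH. Qed.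

Theorem mainTheorem5 (R : realType) (n : nat) (D : seq bool) :
  (1 <= n)%N -> is_dyck n D ->
  (exists S : seq R, starting_set R n (psi n (area D)) S /\ disjoint_shift R S) /\
  (forall S : seq R, starting_set R n (psi n (area D)) S -> disjoint_shift R S ->
     phi_word R S = zeta_word (area D)).
Proof.
move=> _ [_ ups_D _].
have size_a : size (area D) = n by rewrite /area size_area_aux.
have S0_st := S0_starting_set R n (area D).
have S0_disj := @S0_disjoint_shift R n (area D).
split; first by exists (S0 R n (area D)).
move=> S S_st S_disj.
rewrite -(phi_S0 R size_a).
exact: phi_word_invariant S_st S_disj S0_st S0_disj.
Qed.
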